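(* Let $G$ be a word-representable graph and $n\ge 2$. Then $l(G \circ K_n) \le n\,l(G) + (n-1)\kappa_G$, where $\kappa_G$ is the size of a maximum clique of $G$.
   Context: All graphs are simple and undirected; $K_n$ is the complete graph on $n$ vertices, rooted at one of its vertices. Letters $x,y$ alternate in a word $w$ if deleting all other letters from $w$ yields $xyxy\ldots$ or $yxyx\ldots$ (of either parity). A word $w$ over $V(G)$ represents $G$ if every vertex occurs in $w$ and for all distinct $x,y$, $xy\in E(G)$ iff $x,y$ alternate in $w$; $G$ is word-representable if such a word exists, and $l(G)$ is the minimum length of a word representing $G$. For a graph $G$ and a rooted graph $H$, the rooted product $G\circ H$ is obtained by taking $|V(G)|$ disjoint copies of $H$, one for each vertex $v$ of $G$, and identifying each vertex $v$ of $G$ with the root of its copy of $H$. *)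

From mathcomp Require Import all_boot.
Set Implicit Arguments. Unset Strict Implicit. Unset Printing Implicit Defensive.

Definition simple_graph (T : finType) (e : rel T) : Prop :=
  symmetric e /\ irreflexive e.

(* x and y alternate in w: deleting all letters other than x, y from w yields
   xyxy... or yxyx... (any parity), i.e. no two consecutive letters of the
   restricted word are equal. *)
Definition alternate (T : eqType) (w : seq T) (x y : T) : bool :=
  sorted (fun a b => a != b) (filter (fun z => (z == x) || (z == y)) w).

Definition represents (T : finType) (e : rel T) (w : seq T) : Prop :=
  (forall v : T, v \in w) /\
  (forall x y : T, x != y -> (e x y <-> alternate w x y)).

Definition word_representable (T : finType) (e : rel T) : Prop :=
  exists w, represents e w.

Definition is_min_rep_length (T : finType) (e : rel T) (k : nat) : Prop :=
  (exists w, represents e w /\ size w = k) /\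
  (forall w, represents e w -> k <= size w).

Definition is_clique (T : finType) (e : rel T) (S : {set T}) : bool :=
  [forall x in S, forall y in S, (x != y) ==> e x y].

Definition clique_number (T : finType) (e : rel T) : nat :=
  \max_(S : {set T} | is_clique e S) #|S|.

(* Rooted product G o K_n: vertices (v, i) with i : 'I_n; (v, 0) is the root
   of the copy of K_n attached at v, identified with v. *)
Definition rooted_prod_K (T : finType) (e : rel T) (n : nat) : rel (T * 'I_n) :=
  fun p q =>
    if (p.2 == 0 :> nat) && (q.2 == 0 :> nat) then e p.1 q.1
    else (p.1 == q.1) && (p.2 != q.2).
Arguments rooted_prod_K {T} e n _ _.

From mathcomp Require Import all_boot.
From Stdlib Require Import Classical Wf_nat.
Set Implicit Arguments. Unset Strict Implicit. Unset Printing Implicit Defensive.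

(* Let w represent G and let B_v list the non-root vertices of the copy of K_n
   at v. Replace the first occurrence of v in w by B_v v B_v, every later one
   but the last by v B_v, and the last one by v. Restricted to the roots the new
   word is w again. Restricted to one copy it reads (B_v v)^m, or B_v v B_v when
   v occurs only once in w, so the vertices of a copy pairwise alternate. A
   non-root vertex occurs twice inside B_v v B_v with no letter of another copy
   in between, so it alternates with no vertex outside its copy. The new word
   has length n |w| plus n - 1 for every letter occurring exactly once in w, and
   such letters pairwise alternate in w, i.e. they form a clique of G. *)

Lemma sum_count_mem (T : finType) (s : seq T) : \sum_(v : T) count_mem v s = size s.
Proof.
elim: s => [|x s IH] /=; first by rewrite big1.
rewrite big_split /= IH addnC -addn1 -big_mkcond /= (big_pred1 x) // => y; exact: eq_sym.
Qed.

Lemma flatten_map_filter (A B : Type) (a : pred A) (g : A -> seq B) (s : seq A) :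
  (forall x, ~~ a x -> g x = [::]) -> flatten (map g (filter a s)) = flatten (map g s).
Proof. by move=> g0; elim: s => //= x s <-; case: ifP => //= /negbT /g0 ->. Qed.

Lemma flatten_nseq_rot (A : Type) (x y : seq A) k :
  x ++ flatten (nseq k (y ++ x)) = flatten (nseq k (x ++ y)) ++ x.
Proof. by elim: k => [|k IH] /=; rewrite ?cats0 // -!catA IH. Qed.

Lemma size_flatten_nseq (A : Type) (s : seq A) k : size (flatten (nseq k s)) = k * size s.
Proof. by rewrite size_flatten /shape map_nseq sumn_nseq mulnC. Qed.

Lemma sorted_neq_repeat (A : eqType) (s1 s2 : seq A) x :
  ~~ sorted (fun a b => a != b) (s1 ++ x :: x :: s2).
Proof. by apply/negP => /cat_sorted2[_] /=; rewrite eqxx. Qed.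

Lemma sorted_neq_flatten_nseq2 (A : eqType) (a b : A) k :
  a != b -> sorted (fun x y => x != y) (flatten (nseq k [:: a; b])).
Proof.
move=> ab; case: k => //= k; rewrite ab /=.
by elim: k => //= k ->; rewrite eq_sym ab.
Qed.

Lemma filter_pred2_uniq (A : eqType) (s : seq A) x y :
  uniq s -> x \in s -> y \in s -> x != y ->
  exists a b, a != b /\ [seq z <- s | (z == x) || (z == y)] = [:: a; b].
Proof.
move=> s_uniq xs ys xy.
set t := filter _ s.
have t_uniq : uniq t by rewrite filter_uniq.
have t_perm : perm_eq t [:: x; y].
  apply: uniq_perm => //; first by rewrite /= inE xy.
  move=> z; rewrite mem_filter !inE; have [->|_] := eqVneq z x; first by rewrite xs.
  by have [->|_] := eqVneq z y; rewrite ?ys.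
move: (perm_size t_perm) t_uniq; case: t {t_perm} => [|a [|b [|? ?]]] //= _.
by rewrite inE andbT => ab; exists a, b.
Qed.

Lemma alternate_sym (T : eqType) (w : seq T) x y : alternate w x y = alternate w y x.
Proof.
by rewrite /alternate (eq_filter (a2 := fun z => (z == y) || (z == x))) // => z; rewrite orbC.
Qed.

Lemma alternate_count_mem1 (T : eqType) (w : seq T) x y :
  x != y -> count_mem x w = 1 -> count_mem y w = 1 -> alternate w x y.
Proof.
move=> xy wx wy; rewrite /alternate.
set P := fun z => (z == x) || (z == y).
have count_P z : P z -> count_mem z (filter P w) = 1.
  move=> Pz; rewrite count_filter (eq_count (a2 := pred1 z)) => [|u /=].
    by case/orP: Pz => /eqP ->.
  by case: eqVneq => [->|].
have size_P : size (filter P w) = 2.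
  rewrite size_filter; have := count_predUI (pred1 x) (pred1 y) w.
  rewrite (eq_count (a1 := predI _ _) (a2 := pred0)) ?count_pred0 => [|z /=].
    by rewrite addn0 wx wy.
  by case: eqVneq => [->|//]; rewrite (negbTE xy).
move: (filter_all P w) count_P size_P.
case: (filter P w) => [|a [|b [|? ?]]] //= /andP[Pa _] count_P _.
by rewrite andbT; apply/eqP => ab; move: (count_P a Pa); rewrite -ab /= eqxx.
Qed.

Lemma clique_count_mem1 (T : finType) (e : rel T) (w : seq T) :
  represents e w -> is_clique e [set v | count_mem v w == 1].
Proof.
move=> [_ w_rep]; apply/forall_inP => x; rewrite inE => /eqP wx.
apply/forall_inP => y; rewrite inE => /eqP wy; apply/implyP => xy.
by apply/w_rep => //; apply: alternate_count_mem1.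
Qed.

Lemma exists_min_rep_length (T : finType) (e : rel T) :
  word_representable e -> exists k, is_min_rep_length e k.
Proof.
move=> [w w_rep].
pose P k := exists w, represents e w /\ size w = k.
have [k [[Pk k_min] _]] := dec_inh_nat_subset_has_unique_least_element P
  (fun k => classic (P k)) (ex_intro _ (size w) (ex_intro _ w (conj w_rep erefl))).
by exists k; split => // w' w'_rep; apply/leP/k_min; exists w'.
Qed.

Fixpoint tag_occ (T : eqType) (pre s : seq T) : seq (T * nat) :=
  if s is x :: s' then (x, count_mem x pre) :: tag_occ (x :: pre) s' else [::].

Lemma map_fst_tag_occ (T : eqType) (pre s : seq T) : map fst (tag_occ pre s) = s.
Proof. by elim: s pre => //= x s IH pre; rewrite IH. Qed.

Lemma filter_tag_occ (T : eqType) (pre s : seq T) v :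
  [seq p <- tag_occ pre s | p.1 == v] =
  [seq (v, j) | j <- iota (count_mem v pre) (count_mem v s)].
Proof.
elim: s pre => //= x s IH pre; rewrite IH /=.
by case: eqVneq => [->|]; rewrite /= ?eqxx ?add1n // eq_sym => /negbTE ->.
Qed.

Lemma tag_occ_first (T : eqType) (s : seq T) v : v \in s -> (v, 0) \in tag_occ [::] s.
Proof.
move=> vs; have : (v, 0) \in [seq p <- tag_occ [::] s | p.1 == v].
  by rewrite filter_tag_occ; apply: map_f; rewrite mem_iota add0n -has_count has_pred1.
by rewrite mem_filter => /andP[].
Qed.

Section RootedProductWord.

Variables (T : finType) (n : nat).
Implicit Types (v u : T) (w : seq T) (j m : nat).

Definition root v : T * 'I_n.+1 := (v, ord0).

Definition leaves v : seq (T * 'I_n.+1) := [seq (v, lift ord0 i) | i <- enum 'I_n].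

(* The word replacing the j-th (counting from 0) of the m occurrences of v. *)
Definition occ_word v j m :=
  if j == 0 then leaves v ++ root v :: leaves v
  else if j.+1 == m then [:: root v] else root v :: leaves v.

Definition prod_word w :=
  flatten [seq occ_word p.1 p.2 (count_mem p.1 w) | p <- tag_occ [::] w].

Definition block v m := flatten [seq occ_word v j m | j <- iota 0 m].

Lemma root_inj : injective root. Proof. by move=> x y []. Qed.

Lemma mem_leaves v z : (z \in leaves v) = (z.1 == v) && (z.2 != ord0).
Proof.
case: z => u k /=; apply/mapP/andP => [[i _ [-> ->]]|[/eqP -> k0]].
  by rewrite eqxx eq_sym neq_lift.
rewrite eq_sym in k0; have [i -> _] := unlift_some k0.
by exists i; rewrite ?mem_enum.
Qed.

Lemma leaves_uniq v : uniq (leaves v).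
Proof. by rewrite map_inj_uniq ?enum_uniq // => i j /(congr1 snd) /lift_inj. Qed.

Lemma size_leaves v : size (leaves v) = n.
Proof. by rewrite size_map size_enum_ord. Qed.

Lemma mem_occ_word v j m z : z \in occ_word v j m -> z.1 = v.
Proof.
have leaves_fst : all (fun z => z.1 == v) (leaves v) by rewrite all_map; apply/allP => i _ /=.
suff /allP occ_fst : all (fun z => z.1 == v) (occ_word v j m) by move=> /occ_fst/eqP.
by rewrite /occ_word; do !case: ifP => _; rewrite /= ?all_cat /= ?eqxx ?leaves_fst.
Qed.

Lemma filter_prod_word_local w v (P : pred (T * 'I_n.+1)) :
  (forall z, P z -> z.1 = v) ->
  filter P (prod_word w) = filter P (block v (count_mem v w)).
Proof.
move=> Pv; rewrite /prod_word /block !filter_flatten -!map_comp.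
rewrite -(@flatten_map_filter _ _ (fun p => p.1 == v)) ?filter_tag_occ -?map_comp //.
move=> [u j] /= uv; apply/eqP; rewrite -[_ == _]negbK -has_filter; apply/hasPn => z.
by move=> /mem_occ_word zu; apply: contra uv => /Pv <-; rewrite zu.
Qed.

Lemma block_eq v m :
  block v m = flatten (nseq m (leaves v ++ [:: root v])) ++ (if m == 1 then leaves v else [::]).
Proof.
case: m => [|[|k]] //; first by rewrite /block /= /occ_word /= !cats0 -catA.
have middle : [seq occ_word v j k.+2 | j <- iota 1 k] = nseq k (root v :: leaves v).
  rewrite -[k in RHS](size_iota 1) -(size_map (occ_word v ^~ k.+2)).
  apply/all_pred1P/allP => o /mapP[j]; rewrite mem_iota add1n => /andP[j_gt0 j_lt] ->.
  by rewrite /occ_word eqn0Ngt j_gt0 ltn_eqF /= ?eqxx.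
rewrite /block (_ : iota 0 k.+2 = iota 0 (1 + (k + 1))); last by rewrite add1n addn1.
rewrite !iotaD !map_cat !flatten_cat middle.
rewrite /= /occ_word /= addn1 eqxx !cats0.
set s := leaves v ++ [:: root v].
have -> : s ++ s ++ flatten (nseq k s) = flatten (nseq k.+1 s) ++ s.
  by have := flatten_nseq_rot s [::] k.+1; rewrite cats0 /= => <-.
transitivity (leaves v ++ flatten (nseq k.+1 ([:: root v] ++ leaves v)) ++ [:: root v]).
  by rewrite -!catA.
by rewrite catA flatten_nseq_rot -catA.
Qed.

Lemma filter_leaves_root v : [seq z <- leaves v | z.2 == ord0] = [::].
Proof. by rewrite filter_map (eq_filter (a2 := pred0)) ?filter_pred0. Qed.

Lemma filter_prod_word_roots w : [seq z <- prod_word w | z.2 == ord0] = map root w.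
Proof.
rewrite /prod_word filter_flatten -map_comp -[in RHS](map_fst_tag_occ [::] w) -map_comp.
rewrite -[in RHS]flatten_map1; congr flatten; apply: eq_map => -[v j] /=.
by rewrite /occ_word; do !case: ifP => _; rewrite /= ?filter_cat /= ?filter_leaves_root.
Qed.

Lemma alternate_prod_word_roots w v u :
  alternate (prod_word w) (root v) (root u) = alternate w v u.
Proof.
rewrite /alternate.
rewrite (eq_filter (a1 := fun z => _ || _)
  (a2 := predI (fun z => (z == root v) || (z == root u)) (fun z => z.2 == ord0))); last first.
  by move=> z /=; case: eqVneq => [->|_] //=; case: eqVneq => [->|].
have root_neq : {mono root : x y / x != y} by move=> x y; rewrite (inj_eq root_inj).
rewrite filter_predI filter_prod_word_roots filter_map (mono_sorted root_neq).
by congr sorted; apply: eq_filter => x /=; rewrite !(inj_eq root_inj).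
Qed.

Lemma alternate_prod_word_copy w v (i k : 'I_n.+1) :
  v \in w -> i != ord0 -> i != k -> alternate (prod_word w) (v, i) (v, k).
Proof.
move=> vw i0 ik; rewrite /alternate (filter_prod_word_local _ (v := v)) => [|z /orP[] /eqP -> //].
have leaf_i : (v, i) \in leaves v by rewrite mem_leaves eqxx.
rewrite block_eq filter_cat filter_flatten map_nseq filter_cat (fun_if (filter _)).
have [-> | k0] := eqVneq k ord0.
  set P := fun z => (z == _) || _.
  have -> : filter P (leaves v) = [:: (v, i)].
    rewrite -(filter_pred1_uniq (leaves_uniq v) leaf_i); apply: eq_in_filter => z.
    rewrite mem_leaves => /andP[_ z0]; rewrite /P /= orbC.
    by have -> : (z == (v, ord0)) = false by apply: contraNF z0 => /eqP ->.
  have vi_root : (v, i) != root v by rewrite xpair_eqE eqxx.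
  rewrite /= /P eqxx orbT; case: eqP => [-> | _] /=; first by rewrite vi_root eq_sym vi_root.
  by rewrite cats0 sorted_neq_flatten_nseq2.
have leaf_k : (v, k) \in leaves v by rewrite mem_leaves eqxx.
have vi_vk : (v, i) != (v, k) by rewrite xpair_eqE eqxx.
have [a [b [ab ->]]] := filter_pred2_uniq (leaves_uniq v) leaf_i leaf_k vi_vk.
rewrite /= !xpair_eqE eqxx /= ![ord0 == _]eq_sym (negbTE i0) (negbTE k0).
case: eqP => [-> /= | _]; first by rewrite (eq_sym b) ab.
by rewrite cats0 sorted_neq_flatten_nseq2.
Qed.

Lemma alternate_prod_word_foreign w v (i : 'I_n.+1) y :
  v \in w -> i != ord0 -> y.1 != v -> ~~ alternate (prod_word w) (v, i) y.
Proof.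
move=> vw i0 yv; rewrite /alternate /prod_word.
set P := fun z => (z == _) || _.
have leaf_i : (v, i) \in leaves v by rewrite mem_leaves eqxx.
have P_leaves : filter P (leaves v) = [:: (v, i)].
  rewrite -(filter_pred1_uniq (leaves_uniq v) leaf_i); apply: eq_in_filter => z.
  rewrite mem_leaves => /andP[/eqP zv _]; rewrite /P /=.
  have zy : (z == y) = false by apply: contraNF yv => /eqP <-; rewrite zv.
  by rewrite zy orbF.
have P_root : P (root v) = false.
  rewrite /P xpair_eqE eqxx eq_sym (negbTE i0) /=.
  by apply: contraNF yv => /eqP <-.
case/splitPr: (tag_occ_first vw) => s1 s2.
rewrite map_cat flatten_cat filter_cat /= {2}/occ_word /= !filter_cat /= P_root P_leaves /=.
exact: sorted_neq_repeat.
Qed.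

Lemma represents_prod_word (e : rel T) w :
  represents e w -> represents (rooted_prod_K e n.+1) (prod_word w).
Proof.
move=> [w_all w_rep]; split.
  move=> [v k]; apply/flatten_mapP; exists (v, 0); first exact: tag_occ_first.
  rewrite /occ_word /= mem_cat inE mem_leaves eqxx /=.
  by case: eqVneq => [->|]; rewrite ?eqxx ?orbT.
have leaf_case v (k : 'I_n.+1) y : k != ord0 -> (v, k) != y ->
    (v == y.1) && (k != y.2) <-> alternate (prod_word w) (v, k) y.
  case: y => u l k0 vk_ul /=; have [vu | vu] := eqVneq v u.
    subst u; have kl : k != l by apply: contraNneq vk_ul => ->.
    by rewrite kl; split => // _; apply: alternate_prod_word_copy.
  by rewrite (negbTE (alternate_prod_word_foreign _ k0 _)) // eq_sym.
move=> [v k] [u l]; rewrite /rooted_prod_K /=.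
case: ifP => [/andP[/eqP k0 /eqP l0] | /negbT].
  have {k0}-> : k = ord0 by apply: val_inj.
  have {l0}-> : l = ord0 by apply: val_inj.
  move=> vu; rewrite (alternate_prod_word_roots _ v u); apply: w_rep.
  by apply: contraNneq vu => ->.
rewrite negb_and => /orP[k0 | l0] vk_ul; first exact: (leaf_case v k (u, l)).
rewrite alternate_sym [v == u]eq_sym [k == l]eq_sym.
by apply: (leaf_case u l (v, k)); rewrite // eq_sym.
Qed.

Lemma size_prod_word w :
  size (prod_word w) = n.+1 * size w + n * #|[set v | count_mem v w == 1]|.
Proof.
have size_block v m : size (block v m) = m * n.+1 + (m == 1) * n.
  rewrite block_eq size_cat size_flatten_nseq size_cat size_leaves addn1.
  by case: (m == 1); rewrite ?size_leaves ?mul1n.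
have -> : size (prod_word w) = \sum_(v : T) size (block v (count_mem v w)).
  rewrite -(size_map fst) -sum_count_mem; apply: eq_bigr => v _.
  rewrite count_map -size_filter (filter_prod_word_local _ (v := v)) => [|z /eqP //].
  by congr size; apply/all_filterP/allP => z /flatten_mapP[p _ /mem_occ_word zv]; rewrite /= zv.
under eq_bigr do rewrite size_block.
rewrite big_split -!big_distrl sum_count_mem /= mulnC [_ * n]mulnC -sum1_card [in RHS]big_mkcond.
by congr (_ + _ * _); apply: eq_bigr => v _; rewrite inE.
Qed.

End RootedProductWord.

Theorem mainTheorem10 (T : finType) (e : rel T) (n : nat) (lG : nat) :
  simple_graph e -> 2 <= n ->
  word_representable e ->
  is_min_rep_length e lG ->
  exists lH : nat,
    is_min_rep_length (rooted_prod_K e n) lH /\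
    lH <= n * lG + (n - 1) * clique_number e.
Proof.
move=> _ n_ge2 _ [[w [w_rep <-]] _].
case: n n_ge2 => // n _.
have W_rep := represents_prod_word n w_rep.
have [lH lH_min] := exists_min_rep_length (ex_intro _ _ W_rep).
exists lH; split => //.
apply: leq_trans (proj2 lH_min _ W_rep) _.
rewrite size_prod_word subn1 /= leq_add2l leq_mul2l.
by rewrite (leq_bigmax_cond _ (clique_count_mem1 w_rep)) orbT.
Qed.
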